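(* There is a positive absolute constant $C_0$ such that whenever $n\geq 2$, $D$ is a domain in $\mathbb{R}^n$ such that $\mathbb{R}^n\setminus D$ contains at least two points, and $z\in D$, we have $$\lambda''_D(z)\leq\lambda'_D(z)\leq\lambda_D(z)\leq C_0\,\lambda''_D(z)$$ and $$\lambda_D(z)\leq\frac{1}{d(z,\partial D)}.$$
   Context: Write $d(z,\partial D)=\inf\{|z-a|:a\in\partial D\}$ and $Q(z;a,b)=|z-a|\big(1+\big|\log\frac{|a-b|}{|z-a|}\big|\big)$ (equal to $+\infty$ when $a=b$). For $z\in D$ define $1/\lambda_D(z)=\inf\{Q(z;a,b): a,b\in\mathbb{R}^n\setminus D\}$, $1/\lambda'_D(z)=\inf\{Q(z;a,b): a,b\in\partial D\}$, $1/\lambda''_D(z)=\inf\{Q(z;a,b): a,b\in\partial D,\ |z-a|=d(z,\partial D)\}$. *)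

From HB Require Import structures.
From mathcomp Require Import all_boot all_order all_algebra.
From mathcomp Require Import all_classical all_reals all_analysis.
Set Implicit Arguments. Unset Strict Implicit. Unset Printing Implicit Defensive.
Import Order.TTheory GRing.Theory Num.Theory.
Import numFieldNormedType.Exports.
Local Open Scope classical_set_scope.
Local Open Scope ring_scope.

(* Points of R^n are row vectors 'rV[R]_n (product = Euclidean topology). *)
Definition enorm (R : realType) (n : nat) (x : 'rV[R]_n) : R :=
  Num.sqrt (\sum_(i < n) x ord0 i ^+ 2).

Definition edist (R : realType) (n : nat) (x y : 'rV[R]_n) : R := enorm (x - y).

Definition bdry (R : realType) (n : nat) (D : set 'rV[R]_n) : set 'rV[R]_n :=
  closure D `\` interior D.

Definition dist_bdry (R : realType) (n : nat) (D : set 'rV[R]_n) (z : 'rV[R]_n) : R :=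
  fine (ereal_inf [set (edist z a)%:E | a in bdry D]).

Definition Qf (R : realType) (n : nat) (z a b : 'rV[R]_n) : \bar R :=
  if a == b then +oo%E
  else (edist z a * (1 + `| ln (edist a b / edist z a) |))%:E.

Definition inv_lam (R : realType) (n : nat) (D : set 'rV[R]_n) (z : 'rV[R]_n) : \bar R :=
  ereal_inf [set Qf z ab.1 ab.2 | ab in [set ab | ~ D ab.1 /\ ~ D ab.2]].
Definition inv_lam' (R : realType) (n : nat) (D : set 'rV[R]_n) (z : 'rV[R]_n) : \bar R :=
  ereal_inf [set Qf z ab.1 ab.2 | ab in [set ab | bdry D ab.1 /\ bdry D ab.2]].
Definition inv_lam'' (R : realType) (n : nat) (D : set 'rV[R]_n) (z : 'rV[R]_n) : \bar R :=
  ereal_inf [set Qf z ab.1 ab.2 | ab in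
    [set ab | bdry D ab.1 /\ bdry D ab.2 /\ edist z ab.1 = dist_bdry D z]].

Definition lam (R : realType) (n : nat) (D : set 'rV[R]_n) z : R := (fine (inv_lam D z))^-1.
Definition lam' (R : realType) (n : nat) (D : set 'rV[R]_n) z : R := (fine (inv_lam' D z))^-1.
Definition lam'' (R : realType) (n : nat) (D : set 'rV[R]_n) z : R := (fine (inv_lam'' D z))^-1.

From Pilot Require Import Defs.
From HB Require Import structures.
From mathcomp Require Import all_boot all_order all_algebra.
From mathcomp Require Import all_classical all_reals all_analysis.
From mathcomp Require Import ring lra.
Set Implicit Arguments. Unset Strict Implicit. Unset Printing Implicit Defensive.
Import Order.TTheory GRing.Theory Num.Theory.
Import numFieldNormedType.Exports.
Local Open Scope classical_set_scope.
Local Open Scope ring_scope.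
(* mathcomp-analysis exports another [edist]. *)
Local Notation edist := Defs.edist.

(* The inequalities lambda'' <= lambda' <= lambda hold because the infima are
   taken over shrinking sets of pairs (boundary points of the open set D lie
   outside D), and lambda <= 1/d with d = d(z, dD) because every point outside
   D is at distance at least d from z.  For lambda <= C lambda'', fix a boundary
   point a nearest to z and a pair a' != b' outside D; one of them, c, is at
   distance at least |a' - b'|/2 from a.  As n >= 2, we can leave the ball
   B(z, d) orthogonally to a - z and walk to c; the first boundary point b met
   satisfies min(d, |c - a|) <= 6 |b - a| <= 6 (2d + |c - a|).  Since
   r (1 + |log (s/r)|) is nondecreasing in r, these bounds give
   Q(z; a, b) <= 13 Q(z; a', b'). *)

Section Euclidean.
Variables (R : realType) (n : nat).
Implicit Types x y w : 'rV[R]_n.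

Definition dot x y : R := \sum_(i < n) x ord0 i * y ord0 i.

Lemma dotC x y : dot x y = dot y x.
Proof. by apply: eq_bigr => i _; rewrite mulrC. Qed.

Lemma dotDl x y w : dot (x + y) w = dot x w + dot y w.
Proof. by rewrite /dot -big_split; apply: eq_bigr => i _; rewrite !mxE mulrDl. Qed.

Lemma dotZl k x y : dot (k *: x) y = k * dot x y.
Proof. by rewrite /dot mulr_sumr; apply: eq_bigr => i _; rewrite !mxE mulrA. Qed.

Lemma dotBl x y w : dot (x - y) w = dot x w - dot y w.
Proof. by rewrite dotDl -scaleN1r dotZl mulN1r. Qed.

Lemma dotZr k x y : dot y (k *: x) = k * dot y x.
Proof. by rewrite dotC dotZl dotC. Qed.

Lemma dotBr x y w : dot w (x - y) = dot w x - dot w y.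
Proof. by rewrite dotC dotBl !(dotC w). Qed.

Lemma dot_delta i x : dot (delta_mx 0 i) x = x ord0 i.
Proof.
rewrite /dot (bigD1 i) //= mxE !eqxx mul1r big1 ?addr0 // => j ji.
by rewrite mxE (negbTE ji) andbF mul0r.
Qed.

Lemma dot_ge0 x : 0 <= dot x x.
Proof. by apply: sumr_ge0 => i _; rewrite -expr2 sqr_ge0. Qed.

Lemma dot_eq0 x : dot x x = 0 -> x = 0.
Proof.
move=> /eqP; rewrite psumr_eq0 => [/allP x0|i _]; last by rewrite -expr2 sqr_ge0.
apply/rowP => i; rewrite mxE; apply/eqP.
by rewrite -sqrf_eq0 expr2; apply: (implyP (x0 i (mem_index_enum _))).
Qed.

Lemma dot_sqr_le x y : dot x y ^+ 2 <= dot x x * dot y y.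
Proof.
have [/dot_eq0 ->|y0] := eqVneq (dot y y) 0.
  by rewrite -[0 : 'rV_n](scale0r 0) dotZr dotZl !mul0r expr0n mulr0.
have ypos : 0 < dot y y by rewrite lt_def y0 dot_ge0.
have := dot_ge0 (dot y y *: x - dot x y *: y).
rewrite !(dotBl, dotBr, dotZl, dotZr) (dotC y x) => h.
have : 0 <= dot y y * (dot y y * dot x x - dot x y ^+ 2) by lra.
by rewrite pmulr_rge0 // subr_ge0 mulrC.
Qed.

Lemma enorm_sqr x : enorm x ^+ 2 = dot x x.
Proof.
rewrite /enorm sqr_sqrtr; last by apply: sumr_ge0 => i _; rewrite sqr_ge0.
by apply: eq_bigr => i _; rewrite expr2.
Qed.

Lemma enorm_ge0 x : 0 <= enorm x.
Proof. exact: sqrtr_ge0. Qed.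

Lemma dot_le_enorm x y : dot x y <= enorm x * enorm y.
Proof.
apply: le_trans (ler_norm _) _.
rewrite -ler_sqr ?nnegrE ?mulr_ge0 ?enorm_ge0 //.
by rewrite real_normK ?num_real // exprMn !enorm_sqr dot_sqr_le.
Qed.

Lemma enormD x y : enorm (x + y) <= enorm x + enorm y.
Proof.
rewrite -ler_sqr ?nnegrE ?addr_ge0 ?enorm_ge0 // enorm_sqr sqrrD !enorm_sqr.
rewrite !dotDl ![dot _ (x + y)]dotC !dotDl (dotC x y).
have := dot_le_enorm y x; lra.
Qed.

Lemma enormZ k x : enorm (k *: x) = `|k| * enorm x.
Proof.
apply: (@pexpIrn _ 2); rewrite ?nnegrE ?mulr_ge0 ?enorm_ge0 //.
by rewrite exprMn !enorm_sqr dotZl dotZr mulrA -expr2 real_normK ?num_real.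
Qed.

Lemma enormN x : enorm (- x) = enorm x.
Proof. by rewrite -scaleN1r enormZ normrN1 mul1r. Qed.

Lemma enorm_eq0 x : (enorm x == 0) = (x == 0).
Proof.
apply/eqP/eqP => [x0|->]; last by rewrite -(scale0r 0) enormZ normr0 mul0r.
by apply: dot_eq0; rewrite -enorm_sqr x0 expr0n.
Qed.

Lemma enorm_delta i : enorm (delta_mx 0 i : 'rV[R]_n) = 1.
Proof.
apply: (@pexpIrn _ 2); rewrite ?nnegrE ?enorm_ge0 //.
by rewrite enorm_sqr dot_delta mxE !eqxx expr1n.
Qed.

Lemma mx_norm_le_enorm x : `|x| <= enorm x.
Proof.
rewrite (_ : `|x| = mx_norm x) // mx_normrE; apply/bigmax_leP; split=> [|[i j] _ /=].
  exact: enorm_ge0.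
rewrite ord1 -ler_sqr ?nnegrE ?enorm_ge0 // enorm_sqr real_normK ?num_real //.
rewrite /dot (bigD1 j) //= expr2 lerDl.
by apply: sumr_ge0 => k _; rewrite -expr2 sqr_ge0.
Qed.

Lemma enorm_le_mx_norm x : enorm x <= n.+1%:R * `|x|.
Proof.
rewrite -ler_sqr ?nnegrE ?mulr_ge0 ?enorm_ge0 // enorm_sqr.
have coord_le i : x ord0 i * x ord0 i <= `|x| ^+ 2.
  rewrite -expr2 -real_normK ?num_real // ler_sqr ?nnegrE //.
  by rewrite (_ : `|x| = mx_norm x) // mx_normrE; apply/bigmax_geP; right; exists (ord0, i).
apply: le_trans (ler_sum _ (fun i _ => coord_le i)) _.
rewrite sumr_const card_ord exprMn -[X in X <= _]mulr_natl ler_wpM2r ?sqr_ge0 //.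
by rewrite -natrX ler_nat expnS (leq_trans (leqnSn n)) // leq_pmulr.
Qed.

Lemma edistC x y : edist x y = edist y x.
Proof. by rewrite /edist -opprB enormN. Qed.

Lemma le_edist_triangle x y w : edist x w <= edist x y + edist y w.
Proof. by rewrite /edist -(subrKA y); apply: enormD. Qed.

End Euclidean.

Section Boundary.
Variables (R : realType) (n : nat).
Implicit Types (x y z p q : 'rV[R]_n) (D : set 'rV[R]_n).

Lemma open_edist_ball D z : open D -> D z ->
  exists2 e : R, 0 < e & forall y, edist y z < e -> D y.
Proof.
rewrite openE => oD Dz; have /nbhs_ballP[e e0 sub] := oD z Dz.
exists e => // y yz; apply: sub; rewrite -ball_normE /ball_ /=.
by apply: le_lt_trans (mx_norm_le_enorm _) _; rewrite -/(edist z y) edistC.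
Qed.

Lemma bdry_notin D x : open D -> bdry D x -> ~ D x.
Proof. by rewrite openE => oD [_ nIx] Dx; apply: nIx; apply: oD. Qed.

Lemma closed_bdry D : closed (bdry D).
Proof. by apply: closedI; [exact: closed_closure | exact/open_closedC/open_interior]. Qed.

(* Otherwise the trace of the connected segment on D would be relatively clopen,
   being also its trace on closure D. *)
Lemma segment_meets_bdry D p q : open D -> D p -> ~ D q ->
  exists2 t : R, 0 <= t <= 1 & bdry D (p + t *: (q - p)).
Proof.
move=> oD Dp nDq; apply: contrapT => nomeet.
pose g t : 'rV[R]_n := p + t *: (q - p).
have g_cont : continuous g.
  by move=> t; apply: cvgD; [exact: cvg_cst | exact: scalel_continuous].
have cS : connected (g @` `[0, 1]).
  apply: connected_continuous_connected; first exact: segment_connected.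
  exact/continuous_subspaceT.
have S_in_D : g @` `[0, 1] `&` D = g @` `[0, 1].
  apply: cS.
  - exists p; split => //; exists 0; first by rewrite /= in_itv /= lexx ler01.
    by rewrite /g scale0r addr0.
  - by exists D.
  - exists (closure D); first exact: closed_closure.
    apply/seteqP; split => x [Sx Dx]; split => //; first exact: subset_closure.
    apply: contrapT => nDx; apply: nomeet; case: Sx => t t01 gt.
    exists t; first by move: t01; rewrite /= in_itv.
    by rewrite -/(g t) gt; split => // /interior_subset.
have : (g @` `[0, 1]) q.
  by exists 1; [rewrite /= in_itv /= lexx ler01 | rewrite /g scale1r addrC subrK].
by rewrite -S_in_D => -[].
Qed.

Lemma edist_continuous z : continuous (edist z).
Proof.
move=> x; apply/(@cvgrPdist_lt _ _ _ (nbhs x) (nbhs_filter _)) => e e0.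
apply/nbhs_ballP; exists (e / n.+1%:R); first by rewrite /= divr_gt0.
move=> y; rewrite -ball_normE /ball_ /= => xy.
have exy : edist x y < e.
  by apply: le_lt_trans (enorm_le_mx_norm _) _; rewrite mulrC -ltr_pdivlMr.
have := le_edist_triangle z x y; have := le_edist_triangle z y x.
rewrite (edistC y x) ltr_norml; lra.
Qed.

Lemma exists_nearest_bdry D z : bdry D !=set0 ->
  exists2 a, bdry D a & forall y, bdry D y -> edist z a <= edist z y.
Proof.
move=> [y1 By1].
pose K := bdry D `&` (edist z @^-1` [set r | r <= edist z y1]).
have K0 : K !=set0 by exists y1; split => /=.
have cK : compact K.
  apply: bounded_closed_compact.
    exists (enorm z + edist z y1); split; first exact: num_real.
    move=> M zM y [_ Ky]; apply: le_trans (mx_norm_le_enorm _) _.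
    have := le_edist_triangle y z 0.
    rewrite [edist y 0]/edist [edist z 0]/edist !subr0 (edistC y z).
    by move: Ky zM => /= Ky zM; lra.
  apply: closedI; first exact: closed_bdry.
  apply: preimage_closed; last exact: closed_le.
  by move=> x _; apply: edist_continuous.
have [a Ka amin] := EVT_min_rV K0 cK (continuous_subspaceT (@edist_continuous z)).
move: Ka; rewrite inE => -[Ba _]; exists a => // y By.
have [yy1|y1y] := leP (edist z y) (edist z y1); first by apply: amin; rewrite inE.
by apply: le_trans (ltW y1y); apply: amin; rewrite inE; split => /=.
Qed.

End Boundary.

Section Qdist.
Variable R : realType.
Implicit Types d k r s x y L : R.

Lemma ln_le_subr1 x : 0 < x -> ln x <= x - 1.
Proof. by move=> x0; have := @le_ln1Dx R (x - 1); rewrite addrCA subrr addr0; apply; lra. Qed.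

Lemma ln_div_ge0 x y : 0 < y <= x -> 0 <= ln (x / y).
Proof. by case/andP => y0 yx; apply: ln_ge0; rewrite ler_pdivlMr // mul1r. Qed.

Lemma ln_div_lt0 x y : 0 < x < y -> ln (x / y) < 0.
Proof.
case/andP => x0 xy; apply: ln_lt0.
by rewrite divr_gt0 ?ltr_pdivrMr ?mul1r //; apply: lt_trans xy.
Qed.

Lemma ln_div_split x y w : 0 < x -> 0 < y -> 0 < w ->
  ln (x / w) = ln (x / y) + ln (y / w).
Proof.
move=> x0 y0 w0; rewrite -lnM ?posrE ?divr_gt0 //.
by congr ln; field; rewrite !gt_eqF.
Qed.

Lemma ln_le_max k x y : 0 < k -> 0 < x -> 0 < y ->
  y <= k * Num.max 1 x -> ln y <= ln k + `|ln x|.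
Proof.
move=> k0 x0 y0 yk; have m0 : 0 < Num.max 1 x by rewrite lt_max ltr01.
apply: le_trans (_ : ln (k * Num.max 1 x) <= _).
  by rewrite ler_ln // posrE mulr_gt0.
rewrite lnM ?posrE // lerD2l; have [x1|x1] := leP 1 x.
  exact: ler_norm.
by rewrite ln1.
Qed.

Definition Qdist r s := r * (1 + `|ln (s / r)|).

Lemma Qdist_ge r s : 0 <= r -> r <= Qdist r s.
Proof. by move=> r0; rewrite /Qdist ler_peMr // lerDl. Qed.

Lemma Qdistxx s : s != 0 -> Qdist s s = s.
Proof. by move=> s0; rewrite /Qdist divff // ln1 normr0 addr0 mulr1. Qed.

Lemma Qdist_homo d r L : 0 < d <= r -> 0 < L -> Qdist d L <= Qdist r L.
Proof.
case/andP => d0 dr L0; have r0 := lt_le_trans d0 dr.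
have rd0 : 0 <= ln (r / d) by rewrite ln_div_ge0 ?d0.
have rd_le : d * ln (r / d) <= r - d.
  have := ln_le_subr1 (divr_gt0 r0 d0).
  by rewrite -(ler_pM2l d0) mulrBr mulr1 mulrCA divff ?gt_eqF ?mulr1.
rewrite /Qdist (ln_div_split L0 r0 d0).
have [rL|Lr] := leP r L.
  have LrE : 0 <= ln (L / r) by rewrite ln_div_ge0 ?r0.
  rewrite !ger0_norm ?addr_ge0 //.
  have : d * ln (L / r) <= r * ln (L / r) by rewrite ler_wpM2r.
  lra.
have Lr0 : ln (L / r) < 0 by rewrite ln_div_lt0 ?L0.
rewrite (ltr0_norm Lr0); have [dL|Ld] := leP d L.
  rewrite -(ln_div_split L0 r0 d0) ger0_norm ?ln_div_ge0 ?d0 //.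
  have := ln_le_subr1 (divr_gt0 L0 d0).
  rewrite -(ler_pM2l d0) mulrBr mulr1 mulrCA divff ?gt_eqF ?mulr1 //.
  nra.
have Ld0 : ln (L / d) < 0 by rewrite ln_div_lt0 ?L0.
rewrite -(ln_div_split L0 r0 d0) ltr0_norm // (ln_div_split L0 r0 d0).
nra.
Qed.

Lemma Qdist_compare d r s L : 0 < d <= r -> 0 < s ->
  Num.min d s <= 12 * L -> L <= 4 * r + s -> Qdist d L <= 13 * Qdist r s.
Proof.
move=> d0r s0 Lmin Lmax; have /andP[d0 dr] := d0r; have r0 := lt_le_trans d0 dr.
have L0 : 0 < L by move: Lmin; rewrite ge_min => /orP[]; lra.
have Qrs := Qdist_ge s (ltW r0).
have X0 : 0 <= `|ln (s / r)| := normr_ge0 _.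
have [rL|Lr] := leP r L.
  apply: le_trans (Qdist_homo d0r L0) _.
  rewrite /Qdist ger0_norm ?ln_div_ge0 ?r0 //.
  have : ln (L / r) <= ln 5 + `|ln (s / r)|.
    apply: ln_le_max; rewrite ?divr_gt0 //.
    rewrite ler_pdivrMr // mulrAC; have [s1|s1] := leP 1 (s / r).
      rewrite (_ : 5 * r * (s / r) = 5 * s); last by field; rewrite gt_eqF.
      by move: s1; rewrite ler_pdivlMr // mul1r; lra.
    by rewrite mulr1; move: s1; rewrite ltr_pdivrMr // mul1r; lra.
  have := ln_sublinear (ltr0n R 5).
  rewrite /Qdist; nra.
have [dL|Ld] := leP d L.
  apply: le_trans (Qdist_homo (_ : 0 < d <= L) L0) _; first by rewrite d0.
  by rewrite Qdistxx ?gt_eqF //; apply: le_trans (ltW Lr) _; lra.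
have Ld0 : ln (L / d) < 0 by rewrite ln_div_lt0 ?L0.
have [dL12|sL12] := leP d (12 * L).
  rewrite /Qdist ltr0_norm // -lnV ?posrE ?divr_gt0 // invf_div.
  have : ln (d / L) <= ln 12.
    by rewrite ler_ln ?posrE ?divr_gt0 // ler_pdivrMr.
  have := ln_sublinear (ltr0n R 12).
  rewrite /Qdist in Qrs *; nra.
have sL : s <= 12 * L by move: Lmin; rewrite ge_min => /orP[]; lra.
apply: le_trans (Qdist_homo d0r L0) _.
have Lr0 : ln (L / r) < 0 by rewrite ln_div_lt0 ?L0.
rewrite /Qdist ltr0_norm // -lnV ?posrE ?divr_gt0 // invf_div.
have : ln (r / L) <= ln 12 + `|ln (s / r)|.
  have -> : `|ln (s / r)| = `|ln (r / s)|.
    by rewrite -invf_div lnV ?posrE ?divr_gt0 // normrN.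
  apply: ln_le_max; rewrite ?divr_gt0 //.
  apply: le_trans (_ : r / L <= 12 * (r / s)) _.
    rewrite -subr_ge0 (_ : _ - _ = r * (12 * L - s) / (s * L)).
      by rewrite divr_ge0 ?mulr_ge0 ?subr_ge0 // ltW.
    by field; rewrite !gt_eqF.
  by rewrite ler_pM2l // le_max lexx orbT.
have := ln_sublinear (ltr0n R 12).
nra.
Qed.

End Qdist.

Section Geometry.
Variables (R : realType) (n : nat).
Implicit Types (w e z a c : 'rV[R]_n) (D : set 'rV[R]_n).

Lemma exists_orthogonal w : (2 <= n)%N -> exists2 u, u != 0 & dot u w = 0.
Proof.
move=> n2; have n0 : (0 < n)%N by apply: leq_trans n2.
pose i0 := Ordinal n0; pose i1 := Ordinal n2.
have [/andP[/eqP w0 _]|w_neq0] := boolP ((w ord0 i0 == 0) && (w ord0 i1 == 0)).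
  exists (delta_mx 0 i0); last by rewrite dot_delta.
  by rewrite -enorm_eq0 enorm_delta oner_eq0.
exists (w ord0 i1 *: delta_mx 0 i0 - w ord0 i0 *: delta_mx 0 i1).
  apply: contra w_neq0 => /eqP/rowP u0.
  have := u0 i0; have := u0 i1; rewrite !mxE !eqxx /= !mulr1 !mulr0 sub0r subr0.
  by move=> /eqP; rewrite oppr_eq0 => /eqP -> ->; rewrite eqxx.
by rewrite dotBl !dotZl !dot_delta mulrC subrr.
Qed.

Lemma exists_unit_orthogonal w e : (2 <= n)%N ->
  exists v, [/\ enorm v = 1, dot v w = 0 & 0 <= dot e v].
Proof.
move=> n2; have [u u0 uw] := exists_orthogonal w n2.
pose v := (enorm u)^-1 *: u.
have v1 : enorm v = 1.
  by rewrite enormZ ger0_norm ?invr_ge0 ?enorm_ge0 // mulVf ?enorm_eq0.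
have vw : dot v w = 0 by rewrite dotZl uw mulr0.
have [ev|ev] := leP 0 (dot e v); first by exists v.
exists (- v); rewrite enormN -scaleN1r dotZl dotZr vw mulr0 mulN1r oppr_ge0.
by split=> //; apply: ltW.
Qed.

(* The segment towards [c] starts from a point of B(z, d) reached orthogonally
   to [a - z]; its component along that orthogonal direction keeps it away
   from [a]. *)
Lemma exists_bdry_away D z a c : (2 <= n)%N -> open D -> 0 < edist z a ->
  (forall y, edist y z < edist z a -> D y) -> ~ D c ->
  exists2 b, bdry D b &
    Num.min (edist z a) (edist c a) <= 6 * edist b a <= 6 * (2 * edist z a + edist c a).
Proof.
move=> n2 oD d0 ball nDc.
set d := edist z a in d0 ball *; set rho := edist c a.
have [v [v1 vw ev]] := exists_unit_orthogonal (z - a) (c - a) n2.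
pose p := z + (d / 2) *: v.
have d2 : `|d / 2| = d / 2 by rewrite ger0_norm // divr_ge0 // ltW.
have pa : p - a = (z - a) + (d / 2) *: v by rewrite /p addrAC.
have Dp : D p.
  by apply: ball; rewrite /edist /p addrAC subrr add0r enormZ v1 mulr1 d2; lra.
have [t /andP[t0 t1] Bb] := segment_meets_bdry oD Dp nDc.
exists (p + t *: (c - p)) => //.
set b := p + t *: (c - p); set L := edist b a.
have bE : b - a = (1 - t) *: (p - a) + t *: (c - a).
  by apply/rowP => j; rewrite !mxE; ring.
have pa_le : enorm (p - a) <= d + d / 2.
  by rewrite pa; apply: le_trans (enormD _ _) _; rewrite enormZ v1 mulr1 d2.
have t1_ge0 : 0 <= 1 - t by rewrite subr_ge0.
have L_ge_v : (1 - t) * (d / 2) <= L.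
  have : dot (b - a) v = (1 - t) * (d / 2) + t * dot (c - a) v.
    rewrite bE (dotDl ((1 - t) *: _)) !dotZl pa (dotDl (z - a)) dotZl.
    by rewrite (dotC (z - a)) vw -enorm_sqr v1; ring.
  have := dot_le_enorm (b - a) v; rewrite v1 mulr1 -/(edist b a) -/L.
  have : 0 <= t * dot (c - a) v by rewrite mulr_ge0.
  lra.
have L_ge_c : t * rho <= L + (1 - t) * (d + d / 2).
  have := enormD (b - a) (- ((1 - t) *: (p - a))).
  rewrite {1}bE addrAC subrr add0r enormN !enormZ !ger0_norm // -/(edist c a) -/rho.
  have : (1 - t) * enorm (p - a) <= (1 - t) * (d + d / 2) by rewrite ler_wpM2l.
  rewrite -/(edist b a) -/L; lra.
have L_le : L <= 2 * d + rho.
  rewrite /L /edist bE; apply: le_trans (enormD _ _) _.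
  rewrite !enormZ !ger0_norm // -/(edist c a) -/rho.
  have : (1 - t) * enorm (p - a) <= (1 - t) * (d + d / 2) by rewrite ler_wpM2l.
  have : t * rho <= rho by rewrite ler_piMl // /rho /edist enorm_ge0.
  nra.
have : t * Num.min d rho <= t * rho by rewrite ler_wpM2l // ge_min lexx orbT.
have : (1 - t) * Num.min d rho <= (1 - t) * d by rewrite ler_wpM2l // ge_min lexx.
move=> ? ?; apply/andP; split; lra.
Qed.

End Geometry.

Lemma Qf_neq (R : realType) n (z a b : 'rV[R]_n) :
  a != b -> Qf z a b = (Qdist (edist z a) (edist a b))%:E.
Proof. by rewrite /Qf => /negbTE ->. Qed.

Section InverseLambda.
Variables (R : realType) (n : nat) (D : set 'rV[R]_n) (z : 'rV[R]_n).

Lemma inv_lam_le_inv_lam' : open D -> (inv_lam D z <= inv_lam' D z)%E.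
Proof.
move=> oD; apply: ereal_inf_le_tmp => _ [ab [Ba Bb] <-]; exists ab => //.
by split; apply: bdry_notin oD _.
Qed.

Lemma inv_lam'_le_inv_lam'' : (inv_lam' D z <= inv_lam'' D z)%E.
Proof. by apply: ereal_inf_le_tmp => _ [ab [Ba [Bb _]] <-]; exists ab. Qed.

Variable a : 'rV[R]_n.
Hypotheses (oD : open D) (Dz : D z) (Ba : bdry D a)
  (a_nearest : forall y, bdry D y -> edist z a <= edist z y).

Lemma dist_bdry_nearest : dist_bdry D z = edist z a.
Proof.
rewrite /dist_bdry (_ : ereal_inf _ = (edist z a)%:E) //.
apply/le_anti/andP; split; first by apply: ereal_inf_lbound; exists a.
by apply: le_ereal_inf_tmp => _ [y By <-]; rewrite lee_fin a_nearest.
Qed.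

Lemma nearest_gt0 : 0 < edist z a.
Proof.
have [e e0 ball] := open_edist_ball oD Dz.
apply: lt_le_trans e0 _; rewrite leNgt edistC; apply/negP => /ball.
exact: bdry_notin oD Ba.
Qed.

Lemma nearest_le_notin y : ~ D y -> edist z a <= edist z y.
Proof.
move=> nDy; have [t /andP[t0 t1] Bx] := segment_meets_bdry oD Dz nDy.
apply: le_trans (a_nearest Bx) _.
rewrite /edist opprD addrA subrr sub0r enormN enormZ ger0_norm //.
by rewrite -enormN opprB ler_piMl // enorm_ge0.
Qed.

Lemma nearest_le_inv_lam : ((edist z a)%:E <= inv_lam D z)%E.
Proof.
apply: le_ereal_inf_tmp => _ [[a' b'] [nDa' _] <-] /=.
rewrite /Qf; case: eqP => _; first exact: leey.
rewrite lee_fin; apply: le_trans (nearest_le_notin nDa') _.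
by rewrite Qdist_ge // /edist enorm_ge0.
Qed.

Lemma inv_lam''_le_Qf a' b' : (2 <= n)%N -> ~ D a' -> ~ D b' ->
  (inv_lam'' D z <= 13%:E * Qf z a' b')%E.
Proof.
move=> n2 nDa' nDb'; have [->|ab'] := eqVneq a' b'.
  by rewrite /Qf eqxx mulry gtr0_sg // mul1e leey.
set d := edist z a; set r := edist z a'; set s := edist a' b'.
have d0 : 0 < d := nearest_gt0.
have dr : d <= r := nearest_le_notin nDa'.
have s0 : 0 < s by rewrite lt_def enorm_ge0 enorm_eq0 subr_eq0 ab'.
have ball y : edist y z < d -> D y.
  by move=> yz; apply: contrapT => /nearest_le_notin; rewrite (edistC z y) leNgt yz.
have [c [nDc sc cr]] : exists c, [/\ ~ D c, s <= 2 * edist c a & edist c a <= d + r + s].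
  have := le_edist_triangle a' z a; rewrite (edistC a' z) -/r -/d => a'a.
  have := le_edist_triangle b' a' a; rewrite (edistC b' a') -/s => b'a.
  have := le_edist_triangle a' a b'; rewrite (edistC a b') -/s => a'b'.
  have [sa'|a's] := leP s (2 * edist a' a); first by exists a'; split => //; lra.
  by exists b'; split => //; lra.
have [b Bb] := exists_bdry_away n2 oD d0 ball nDc; rewrite -/d => /andP[Lmin Lmax].
have L0 : 0 < edist b a.
  by move: Lmin; rewrite ge_min => /orP[]; lra.
have ab : a != b by rewrite -subr_eq0 -enorm_eq0 -/(edist a b) edistC gt_eqF.
have Qab : (inv_lam'' D z <= Qf z a b)%E.
  by apply: ereal_inf_lbound; exists (a, b); rewrite ?dist_bdry_nearest.
apply: le_trans Qab _.
rewrite !Qf_neq // lee_fin -/d -/r -/s (edistC a b).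
apply: Qdist_compare; rewrite ?d0 //.
  by move: Lmin; rewrite !ge_min => /orP[]; lra.
lra.
Qed.

Lemma inv_lam''_le_inv_lam : (2 <= n)%N -> (inv_lam'' D z <= 13%:E * inv_lam D z)%E.
Proof.
move=> n2; rewrite /inv_lam -ereal_inf_pZl //.
apply: le_ereal_inf_tmp => _ [_ [[a' b'] [nDa' nDb'] <-] <-].
exact: inv_lam''_le_Qf.
Qed.

End InverseLambda.

Lemma fine_inv_chain (R : realType) (C d : R) (x y w : \bar R) :
  0 < d -> 0 < C -> (d%:E <= x)%E -> (x <= y)%E -> (y <= w)%E ->
  (w <= C%:E * x)%E -> (w < +oo)%E ->
  (fine w)^-1 <= (fine y)^-1 /\ (fine y)^-1 <= (fine x)^-1 /\
  (fine x)^-1 <= C * (fine w)^-1 /\ (fine x)^-1 <= d^-1.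
Proof.
case: x => [x||]; case: y => [y||]; case: w => [w||] //= d0 C0; rewrite ?lee_fin //.
move=> dx xy yw wx _; have x0 := lt_le_trans d0 dx.
have y0 := lt_le_trans x0 xy; have w0 := lt_le_trans y0 yw.
rewrite !lef_pV2 ?posrE // -[C * _]invrK invfM invrK lef_pV2 ?posrE ?mulr_gt0 ?invr_gt0 //.
by rewrite ler_pdivrMl.
Qed.

Unset Implicit Arguments.
Theorem lemma2 (R : realType) :
  exists C0 : R, 0 < C0 /\
  forall (n : nat) (D : set 'rV[R]_n) (z : 'rV[R]_n),
    (2 <= n)%N -> open D -> connected D -> D !=set0 ->
    (exists a b, a != b /\ ~ D a /\ ~ D b) ->
    D z ->
    lam'' D z <= lam' D z /\ lam' D z <= lam D z /\ lam D z <= C0 * lam'' D z /\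
    lam D z <= (dist_bdry D z)^-1.
Proof.
exists 13; split => // n D z n2 oD _ _ [a [b [ab [nDa nDb]]]] Dz.
have [t _ Bt] := segment_meets_bdry oD Dz nDa.
have [a0 Ba0 a0_nearest] := exists_nearest_bdry z (ex_intro _ _ Bt).
rewrite /lam /lam' /lam'' (dist_bdry_nearest Ba0 a0_nearest).
apply: fine_inv_chain (inv_lam'_le_inv_lam'' D z) _ _ => //.
- exact: nearest_gt0 oD Dz Ba0.
- exact: nearest_le_inv_lam oD Dz a0_nearest.
- exact: inv_lam_le_inv_lam'.
- exact: inv_lam''_le_inv_lam oD Dz Ba0 a0_nearest n2.
apply: le_lt_trans (inv_lam''_le_Qf oD Dz Ba0 a0_nearest n2 nDa nDb) _.
by rewrite Qf_neq // -EFinM ltry.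
Qed.
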